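(* Let $N\ge 1$ be an integer, $\mu=e^{2\pi i/N}$, and let $(s_1,i_1),\dots,(s_n,i_n)$ be pairs with $s_j$ positive integers and $i_j\in\mathbb{Z}$ ($n\ge 1$). For a positive integer $M$ put, with $i_0:=0$, $$H_M=\sum_{M\ge m_1>m_2>\cdots>m_n\ge 1}\ \prod_{j=1}^n \frac{\mu^{(i_j-i_{j-1})m_j}}{m_j^{s_j}}.$$ Then there exist finitely many positive integers $t_1,\dots,t_r$, complex numbers $a_1,\dots,a_r$, and a number $c\in\mathsf{CMZV}^N_{s_1+\cdots+s_n}$ such that $$H_M=\sum_{j=1}^r a_j(\log M+\gamma)^{t_j}+c+o(1)\qquad (M\to\infty),$$ where $\gamma$ is the Euler–Mascheroni constant.
   Context: For positive integers $s_1,\dots,s_k$ and complex $a_1,\dots,a_k$ define $L_{s_1,\dots,s_k}(a_1,\dots,a_k)=\sum_{n_1>\cdots>n_k\ge1}\frac{a_1^{n_1}\cdots a_k^{n_k}}{n_1^{s_1}\cdots n_k^{s_k}}$. For integers $N\ge1$ and $w\ge1$, $\mathsf{CMZV}^N_w$ denotes the $\mathbb{Q}$-linear span of all values $L_{s_1,\dots,s_k}(a_1,\dots,a_k)$ with $k\ge1$, $s_j$ positive integers with $s_1+\cdots+s_k=w$, each $a_j$ an $N$-th root of unity, and $(s_1,a_1)\neq(1,1)$ (so that the series converges). These are the colored multiple zeta values of weight $w$ and level $N$. *)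

From Stdlib Require Import Reals List ZArith QArith.
From Coquelicot Require Import Coquelicot.
Open Scope R_scope.

(* mu_pow N k = mu^k with mu = e^{2 pi i / N}, i.e. cos(2 pi k/N) + i sin(2 pi k/N). *)
Definition mu_pow (N : nat) (k : Z) : C :=
  (cos (2 * PI * IZR k / INR N), sin (2 * PI * IZR k / INR N)).

Fixpoint csum (f : nat -> C) (M : nat) : C :=
  match M with
  | O => RtoC 0
  | S M' => Cplus (csum f M') (f (S M'))
  end.

(* Truncated nested sum:
   nsum [(s1,a1);...;(sk,ak)] M =
     sum_{M >= m1 > m2 > ... > mk >= 1} prod_j a_j^{m_j} / m_j^{s_j}. *)
Fixpoint nsum (l : list (nat * C)) (M : nat) : C :=
  match l with
  | nil => RtoC 1
  | (s, a) :: r =>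
      csum (fun m => Cmult (Cdiv (Cpow a m) (Cpow (RtoC (INR m)) s)) (nsum r (m - 1))) M
  end.

Definition cmzv_data (N w : nat) (d : list (nat * C)) : Prop :=
  List.Forall (fun p => (1 <= fst p)%nat /\ Cpow (snd p) N = RtoC 1) d /\
  fold_right (fun p acc => (fst p + acc)%nat) O d = w /\
  match d with
  | nil => False
  | (s, a) :: _ => ~ (s = 1%nat /\ a = RtoC 1)
  end.

Definition mzv_value (d : list (nat * C)) (v : C) : Prop :=
  is_lim_seq (fun M => Cmod (Cminus (nsum d M) v)) 0.

Definition in_CMZV (N w : nat) (c : C) : Prop :=
  exists l : list (Q * list (nat * C) * C),
    List.Forall (fun e => cmzv_data N w (snd (fst e)) /\ mzv_value (snd (fst e)) (snd e)) l /\
    c = fold_right (fun e acc => Cplus (Cmult (RtoC (Q2R (fst (fst e)))) (snd e)) acc)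
                   (RtoC 0) l.

Fixpoint colors (N : nat) (prev : Z) (l : list (nat * Z)) : list (nat * C) :=
  match l with
  | nil => nil
  | (s, i) :: r => (s, mu_pow N (i - prev)) :: colors N i r
  end.

Definition H (N : nat) (l : list (nat * Z)) (M : nat) : C := nsum (colors N 0 l) M.

Definition weight (l : list (nat * Z)) : nat :=
  fold_right (fun p acc => (fst p + acc)%nat) O l.

Fixpoint harm (n : nat) : R :=
  match n with O => 0 | S n' => harm n' + / INR (S n') end.

Definition EulerGamma : R := real (Lim_seq (fun n => harm n - ln (INR n))).

(* Write H_M as a truncated nested sum over letters (s, a), a an N-th root of unity.
   A word whose first letter is not (1, 1) has a convergent sum, with error O(M^(-1/2)):
   by telescoping when s >= 2 and by Abel summation when s = 1, a <> 1.  Leading letters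
   (1, 1) are peeled off with the stuffle relation
     harm M * Z(1^k u; M) = (k + 1) Z(1^(k+1) u; M) + (sums over words with at most k
                                                       leading 1s),
   so by induction H_M is a polynomial in harm M whose coefficients are rational
   combinations of convergent nested sums of complementary weight.  Since
   harm M = log M + gamma + O(1/M) and harm M = O(M^(1/4)), replacing harm M by
   log M + gamma costs o(1); the constant term then tends to a rational combination of
   colored MZVs of full weight. *)

From Stdlib Require Import Reals List ZArith QArith.
From Coquelicot Require Import Coquelicot.
From Stdlib Require Import Qreals Lra Lia Classical.
Open Scope R_scope.

Lemma is_lim_seq_inv_INR : is_lim_seq (fun n => / INR n) 0.
Proof.
  replace (Finite 0) with (Rbar_inv p_infty) by reflexivity.
  apply is_lim_seq_inv; [apply is_lim_seq_INR | discriminate].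
Qed.

Lemma is_lim_seq_scal_0 (K : R) (u : nat -> R) : is_lim_seq u 0 -> is_lim_seq (fun n => K * u n) 0.
Proof.
  intros Hu. replace (Finite 0) with (Rbar_mult K 0) by (simpl; f_equal; ring).
  apply is_lim_seq_scal_l, Hu.
Qed.

Lemma is_lim_seq_add_0 (u v : nat -> R) : is_lim_seq u 0 -> is_lim_seq v 0 ->
  is_lim_seq (fun n => u n + v n) 0.
Proof.
  intros Hu Hv. replace (Finite 0) with (Rbar_plus 0 0) by (simpl; f_equal; ring).
  apply is_lim_seq_plus'; assumption.
Qed.

Lemma is_lim_seq_0_le (u v : nat -> R) : is_lim_seq v 0 ->
  (forall n, (1 <= n)%nat -> Rabs (u n) <= v n) -> is_lim_seq u 0.
Proof.
  intros Hv Hle. apply is_lim_seq_abs_0.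
  apply is_lim_seq_le_le_loc with (fun _ => 0) v; [|apply is_lim_seq_const | exact Hv].
  exists 1%nat. intros n Hn. split; [apply Rabs_pos | apply Hle, Hn].
Qed.

Lemma is_lim_seq_of_rate (u e : nat -> R) : is_lim_seq e 0 ->
  (forall M N, (1 <= M)%nat -> (M <= N)%nat -> Rabs (u N - u M) <= e M) ->
  exists l : R, is_lim_seq u l /\ forall M, (1 <= M)%nat -> Rabs (u M - l) <= e M.
Proof.
  intros He Hu.
  assert (Hcauchy : ex_lim_seq_cauchy u).
  { intros eps. apply is_lim_seq_spec in He.
    destruct (He (pos_div_2 eps)) as [M0 HM0]. exists (S M0). intros n m Hn Hm.
    specialize (HM0 (S M0) ltac:(lia)). rewrite Rminus_0_r in HM0. simpl in HM0.
    pose proof (Hu (S M0) n ltac:(lia) Hn). pose proof (Hu (S M0) m ltac:(lia) Hm).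
    pose proof (Rle_abs (e (S M0))).
    replace (u n - u m) with ((u n - u (S M0)) - (u m - u (S M0))) by ring.
    eapply Rle_lt_trans; [apply Rabs_triang|]. rewrite Rabs_Ropp. lra. }
  destruct (proj2 (ex_lim_seq_cauchy_corr u) Hcauchy) as [l Hl].
  exists l. split; [exact Hl|]. intros M HM.
  assert (Hlim : is_lim_seq (fun N => Rabs (u N - u M)) (Rabs (l - u M))).
  { apply (is_lim_seq_abs _ (l - u M)), is_lim_seq_minus'; [exact Hl | apply is_lim_seq_const]. }
  assert (Hle : Rbar_le (Rabs (l - u M)) (e M)).
  { refine (is_lim_seq_le_loc _ (fun _ => e M) _ _ _ Hlim (is_lim_seq_const _)).
    exists M. intros N HN. apply Hu; assumption. }
  rewrite Rabs_minus_sym. exact Hle.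
Qed.

(** * Harmonic numbers and Euler's constant *)

Lemma ln_le_sub_1 x : 0 < x -> ln x <= x - 1.
Proof.
  intros Hx. pose proof (exp_ineq1_le (ln x)) as E. rewrite exp_ln in E by exact Hx. lra.
Qed.

Lemma INR_ge_1 n : (1 <= n)%nat -> 1 <= INR n.
Proof. intros Hn. apply (le_INR 1 n) in Hn. simpl in Hn. exact Hn. Qed.

Lemma Rinv_INR_pos n : (1 <= n)%nat -> 0 < / INR n.
Proof. intros Hn. apply Rinv_0_lt_compat. pose proof (INR_ge_1 n Hn). lra. Qed.

Lemma harm_S n : harm (S n) = harm n + / INR (S n).
Proof. reflexivity. Qed.

Lemma harm_nonneg n : 0 <= harm n.
Proof.
  induction n as [|n IH]; [simpl; lra|]. rewrite harm_S.
  pose proof (Rinv_INR_pos (S n) ltac:(lia)). lra.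
Qed.

Lemma harm_le_harm n m : (n <= m)%nat -> harm n <= harm m.
Proof.
  induction 1 as [|m _ IH]; [lra|]. rewrite harm_S.
  pose proof (Rinv_INR_pos (S m) ltac:(lia)). lra.
Qed.

Lemma harm_ge_1 n : (1 <= n)%nat -> 1 <= harm n.
Proof. intros Hn. pose proof (harm_le_harm 1 n Hn) as E. simpl in E. lra. Qed.

Definition euler_seq (n : nat) : R := harm n - ln (INR n).

Lemma ln_succ_sub_ln_bounds n : (1 <= n)%nat ->
  / INR (S n) <= ln (INR (S n)) - ln (INR n) <= / INR n.
Proof.
  intros Hn. pose proof (INR_ge_1 n Hn). rewrite S_INR. split.
  - pose proof (ln_le_sub_1 (INR n / (INR n + 1)) ltac:(apply Rdiv_lt_0_compat; lra)) as E.
    rewrite ln_div in E by lra.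
    replace (INR n / (INR n + 1) - 1) with (- / (INR n + 1)) in E by (field; lra). lra.
  - pose proof (ln_le_sub_1 ((INR n + 1) / INR n) ltac:(apply Rdiv_lt_0_compat; lra)) as E.
    rewrite ln_div in E by lra.
    replace ((INR n + 1) / INR n - 1) with (/ INR n) in E by (field; lra). lra.
Qed.

Lemma euler_seq_sub_bounds n m : (1 <= n)%nat -> (n <= m)%nat ->
  0 <= euler_seq n - euler_seq m <= / INR n - / INR m.
Proof.
  intros Hn. induction 1 as [|m Hm IH]; [lra|].
  pose proof (ln_succ_sub_ln_bounds m ltac:(lia)). unfold euler_seq in *. rewrite harm_S. lra.
Qed.

Lemma harm_sub_ln_sub_EulerGamma_bounds n : (1 <= n)%nat ->
  0 <= harm n - ln (INR n) - EulerGamma <= / INR n.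
Proof.
  intros Hn.
  destruct (is_lim_seq_of_rate euler_seq (fun n => / INR n) is_lim_seq_inv_INR) as [g [Hg Hrate]].
  { intros M N HM HMN. pose proof (euler_seq_sub_bounds M N HM HMN).
    pose proof (Rinv_INR_pos N ltac:(lia)).
    rewrite Rabs_minus_sym, Rabs_right; lra. }
  assert (Eg : EulerGamma = g).
  { unfold EulerGamma. fold euler_seq. rewrite (is_lim_seq_unique _ _ Hg). reflexivity. }
  rewrite Eg. fold (euler_seq n).
  assert (Hlow : Rbar_le g (euler_seq n)).
  { refine (is_lim_seq_le_loc _ (fun _ => euler_seq n) _ _ _ Hg (is_lim_seq_const _)).
    exists n. intros m Hm. pose proof (euler_seq_sub_bounds n m Hn Hm). lra. }
  simpl in Hlow. pose proof (Hrate n Hn) as Hup. split; [lra|].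
  rewrite Rabs_right in Hup by lra. exact Hup.
Qed.

Lemma harm_le_1_add_ln n : (1 <= n)%nat -> harm n <= 1 + ln (INR n).
Proof.
  intros Hn. pose proof (euler_seq_sub_bounds 1 n (le_n 1) Hn) as D.
  unfold euler_seq in D. simpl in D. rewrite ln_1 in D.
  pose proof (Rinv_INR_pos n Hn). lra.
Qed.

Definition log_gamma (M : nat) : R := ln (INR M) + EulerGamma.

Lemma log_gamma_bounds M : (1 <= M)%nat ->
  0 <= log_gamma M <= harm M /\ harm M - log_gamma M <= / INR M.
Proof.
  intros HM. pose proof (harm_sub_ln_sub_EulerGamma_bounds M HM). pose proof (harm_ge_1 M HM).
  pose proof (INR_ge_1 M HM).
  assert (/ INR M <= 1) by (rewrite <- Rinv_1; apply Rinv_le_contravar; lra).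
  unfold log_gamma. lra.
Qed.

Definition root4 (n : nat) : R := sqrt (sqrt (INR n)).

Definition inv_sqrt (n : nat) : R := / sqrt (INR n).

Lemma root4_ge_1 n : (1 <= n)%nat -> 1 <= root4 n.
Proof.
  intros Hn. pose proof (INR_ge_1 n Hn). unfold root4.
  rewrite <- sqrt_1. apply sqrt_le_1_alt. rewrite <- sqrt_1. apply sqrt_le_1_alt. lra.
Qed.

Lemma root4_sqr n : root4 n * root4 n = sqrt (INR n).
Proof. apply sqrt_sqrt, sqrt_pos. Qed.

Lemma root4_pow4 n : root4 n ^ 4 = INR n.
Proof.
  replace (root4 n ^ 4) with ((root4 n * root4 n) * (root4 n * root4 n)) by ring.
  rewrite root4_sqr. apply sqrt_sqrt, pos_INR.
Qed.

Lemma root4_eq_Rpower n : (1 <= n)%nat -> root4 n = Rpower (INR n) (/ 4).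
Proof.
  intros Hn. pose proof (INR_ge_1 n Hn). unfold root4.
  rewrite <- (Rpower_sqrt (INR n)) by lra.
  rewrite <- Rpower_sqrt by apply exp_pos.
  rewrite Rpower_mult. f_equal. field.
Qed.

Lemma root4_le_sqrt n : (1 <= n)%nat -> root4 n <= sqrt (INR n).
Proof.
  intros Hn. pose proof (root4_ge_1 n Hn). rewrite <- root4_sqr. nra.
Qed.

Lemma is_lim_seq_inv_root4 : is_lim_seq (fun n => / root4 n) 0.
Proof.
  apply is_lim_seq_ext with (fun n => sqrt (sqrt (/ INR n))).
  { intros n. unfold root4. rewrite !sqrt_inv. reflexivity. }
  replace (Finite 0) with (Finite (sqrt (sqrt 0))) by (rewrite !sqrt_0; reflexivity).
  apply is_lim_seq_continuous; [apply continuity_pt_sqrt, sqrt_pos|].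
  apply is_lim_seq_continuous; [apply continuity_pt_sqrt; lra|].
  exact is_lim_seq_inv_INR.
Qed.

Lemma inv_sqrt_eq n : (1 <= n)%nat -> inv_sqrt n = / root4 n * / root4 n.
Proof.
  intros Hn. pose proof (root4_ge_1 n Hn). unfold inv_sqrt.
  rewrite <- root4_sqr. field. lra.
Qed.

Lemma inv_sqrt_nonneg n : 0 <= inv_sqrt n.
Proof.
  destruct n as [|n].
  - unfold inv_sqrt. simpl. rewrite sqrt_0, Rinv_0. lra.
  - rewrite inv_sqrt_eq by lia. pose proof (root4_ge_1 (S n) ltac:(lia)).
    assert (0 < / root4 (S n)) by (apply Rinv_0_lt_compat; lra). nra.
Qed.

Lemma is_lim_seq_inv_sqrt : is_lim_seq inv_sqrt 0.
Proof.
  apply is_lim_seq_ext with (fun n => sqrt (/ INR n)).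
  { intros n. apply sqrt_inv. }
  replace (Finite 0) with (Finite (sqrt 0)) by (rewrite sqrt_0; reflexivity).
  apply is_lim_seq_continuous; [apply continuity_pt_sqrt; lra|].
  exact is_lim_seq_inv_INR.
Qed.

Lemma sqrt_div_INR n : (1 <= n)%nat -> sqrt (INR n) / INR n = inv_sqrt n.
Proof.
  intros Hn. pose proof (INR_ge_1 n Hn). unfold inv_sqrt.
  assert (0 < sqrt (INR n)) by (apply sqrt_lt_R0; lra).
  rewrite <- (sqrt_sqrt (INR n)) at 2 by lra. field. lra.
Qed.

(* [1/sqrt n - 1/sqrt (n+1) = 1 / (sqrt n sqrt (n+1) (sqrt n + sqrt (n+1)))] *)
Lemma sqrt_div_sqr_le n : (1 <= n)%nat ->
  sqrt (INR (S n)) / INR (S n) ^ 2 <= 2 * (inv_sqrt n - inv_sqrt (S n)).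
Proof.
  intros Hn. pose proof (INR_ge_1 n Hn). unfold inv_sqrt.
  set (a := sqrt (INR n)). set (b := sqrt (INR (S n))).
  assert (Ha : 0 < a) by (apply sqrt_lt_R0; lra).
  assert (Eb : b * b = INR (S n)) by (apply sqrt_sqrt, pos_INR).
  assert (Ea : a * a = INR n) by (apply sqrt_sqrt, pos_INR).
  rewrite S_INR in Eb.
  assert (Hb : 0 <= b) by apply sqrt_pos.
  assert (Hab : a < b) by nra.
  assert (Hab0 : 0 < a * b) by nra.
  assert (E : / a - / b = / (a * b * (a + b))).
  { replace (/ a - / b) with ((b - a) * (a + b) / (a * b * (a + b))) by (field; lra).
    replace ((b - a) * (a + b)) with 1 by nra. field. nra. }
  rewrite E, S_INR, <- Eb.
  replace (b / (b * b) ^ 2) with (2 * / (2 * (b * b * b))) by (field; lra).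
  assert (a * b * a <= b * b * b) by nra.
  apply Rmult_le_compat_l; [lra|]. apply Rinv_le_contravar; nra.
Qed.

Lemma harm_pow_le_root4 d : exists K, 0 < K /\ forall n, (1 <= n)%nat -> harm n ^ d <= K * root4 n.
Proof.
  set (D := 4 * (INR d + 1)). assert (HD : 0 < D) by (pose proof (pos_INR d); unfold D; lra).
  exists ((1 + D) ^ d). split; [apply pow_lt; lra|].
  intros n Hn. pose proof (INR_ge_1 n Hn).
  set (x := Rpower (INR n) (/ D)).
  assert (Hx : 1 <= x).
  { unfold x. rewrite <- (Rpower_O (INR n)) by lra. apply Rle_Rpower; [lra|].
    left. apply Rinv_0_lt_compat, HD. }
  assert (Hln : ln (INR n) <= D * x).
  { assert (E : ln (INR n) = D * ln x) by (unfold x; rewrite ln_Rpower; field; lra).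
    pose proof (ln_le_sub_1 x ltac:(lra)). rewrite E. nra. }
  assert (Hharm : 0 <= harm n <= (1 + D) * x).
  { pose proof (harm_le_1_add_ln n Hn). pose proof (harm_nonneg n). nra. }
  assert (Hroot : x ^ S d = root4 n).
  { rewrite root4_eq_Rpower by exact Hn. unfold x.
    rewrite <- Rpower_pow by (apply exp_pos). rewrite Rpower_mult.
    f_equal. rewrite S_INR. unfold D. field. pose proof (pos_INR d); lra. }
  apply Rle_trans with (((1 + D) * x) ^ d); [apply pow_incr; exact Hharm|].
  rewrite Rpow_mult_distr, <- Hroot. apply Rmult_le_compat_l; [apply pow_le; lra|].
  simpl. rewrite <- (Rmult_1_l (x ^ d)) at 1. apply Rmult_le_compat_r; [apply pow_le|]; lra.
Qed.

Lemma harm_pow_le_sqrt d : exists K, 0 < K /\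
  forall n m, (n <= m)%nat -> (1 <= m)%nat -> harm n ^ d <= K * sqrt (INR m).
Proof.
  destruct (harm_pow_le_root4 d) as [K [HK Hb]]. exists K. split; [exact HK|].
  intros n m Hnm Hm.
  apply Rle_trans with (harm m ^ d).
  { apply pow_incr. split; [apply harm_nonneg | apply harm_le_harm, Hnm]. }
  eapply Rle_trans; [apply Hb, Hm|]. apply Rmult_le_compat_l; [lra|]. apply root4_le_sqrt, Hm.
Qed.

Lemma pow_sub_pow_le h T j : 0 <= T <= h ->
  0 <= h ^ S j - T ^ S j <= INR (S j) * (h - T) * h ^ j.
Proof.
  intros [HT Hh]. induction j as [|j IH]; [simpl; lra|].
  pose proof (pow_le T (S j) HT). pose proof (pow_incr T h (S j) (conj HT Hh)).
  replace (h ^ S (S j) - T ^ S (S j)) with (h * (h ^ S j - T ^ S j) + T ^ S j * (h - T))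
    by (simpl; ring).
  replace (INR (S (S j)) * (h - T) * h ^ S j)
    with (h * (INR (S j) * (h - T) * h ^ j) + h ^ S j * (h - T)) by (rewrite (S_INR (S j)); simpl; ring).
  split.
  - apply Rplus_le_le_0_compat; apply Rmult_le_pos; lra.
  - apply Rplus_le_compat; [apply Rmult_le_compat_l; lra | apply Rmult_le_compat_r; lra].
Qed.

Lemma is_lim_seq_harm_pow_mul_inv_sqrt j : is_lim_seq (fun M => harm M ^ j * inv_sqrt M) 0.
Proof.
  destruct (harm_pow_le_root4 j) as [K [HK Hb]].
  apply is_lim_seq_0_le with (fun M => K * / root4 M);
    [apply is_lim_seq_scal_0, is_lim_seq_inv_root4|].
  intros M HM. pose proof (root4_ge_1 M HM). pose proof (Hb M HM).
  pose proof (pow_le _ j (harm_nonneg M)).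
  assert (Hinv : 0 < / root4 M) by (apply Rinv_0_lt_compat; lra).
  rewrite inv_sqrt_eq, Rabs_right by (assumption || (apply Rle_ge; nra)).
  apply Rle_trans with (K * root4 M * (/ root4 M * / root4 M)); [nra|].
  right. field. lra.
Qed.

Lemma is_lim_seq_harm_pow_sub j : is_lim_seq (fun M => harm M ^ j - log_gamma M ^ j) 0.
Proof.
  destruct j as [|j].
  { apply is_lim_seq_ext with (fun _ => 0); [intros; simpl; ring | apply is_lim_seq_const]. }
  destruct (harm_pow_le_root4 j) as [K [HK Hb]].
  apply is_lim_seq_0_le with (fun M => INR (S j) * K * / root4 M);
    [apply is_lim_seq_scal_0, is_lim_seq_inv_root4|].
  intros M HM. destruct (log_gamma_bounds M HM) as [HT Hdiff].
  pose proof (pow_sub_pow_le (harm M) (log_gamma M) j HT) as [D0 D1].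
  pose proof (root4_ge_1 M HM). pose proof (Hb M HM). pose proof (pos_INR (S j)).
  pose proof (pow_le _ j (harm_nonneg M)).
  assert (Hroot : root4 M * / INR M <= / root4 M).
  { rewrite <- root4_pow4. replace (root4 M * / root4 M ^ 4) with (/ root4 M * / (root4 M * root4 M))
      by (field; lra).
    assert (/ (root4 M * root4 M) <= 1) by (rewrite <- Rinv_1; apply Rinv_le_contravar; nra).
    assert (0 < / root4 M) by (apply Rinv_0_lt_compat; lra). nra. }
  rewrite Rabs_right by lra. eapply Rle_trans; [exact D1|].
  apply Rle_trans with (INR (S j) * / INR M * (K * root4 M)).
  - rewrite Rmult_assoc, (Rmult_assoc (INR (S j))). apply Rmult_le_compat_l; [lra|].
    apply Rmult_le_compat; lra.
  - replace (INR (S j) * / INR M * (K * root4 M)) with (INR (S j) * K * (root4 M * / INR M)) by ring.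
    apply Rmult_le_compat_l; [nra | exact Hroot].
Qed.

Lemma csum_S f M : csum f (S M) = (csum f M + f (S M))%C.
Proof. reflexivity. Qed.

Lemma csum_ext f g M : (forall m, (1 <= m)%nat -> f m = g m) -> csum f M = csum g M.
Proof.
  intros Hfg. induction M as [|M IH]; [reflexivity|]. rewrite !csum_S, IH, Hfg by lia. reflexivity.
Qed.

Definition term (x : nat * C) (m : nat) : C := (snd x ^ m / INR m ^ fst x)%C.

Definition unimodular (x : nat * C) : Prop := (1 <= fst x)%nat /\ Cmod (snd x) = 1.

Lemma nsum_cons x r M : nsum (x :: r) M = csum (fun m => term x m * nsum r (m - 1))%C M.
Proof. destruct x; reflexivity. Qed.

Lemma nsum_cons_S x r M : nsum (x :: r) (S M) = (nsum (x :: r) M + term x (S M) * nsum r M)%C.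
Proof. rewrite !nsum_cons, csum_S. do 3 f_equal. lia. Qed.

Lemma nsum_cons_0 x r : nsum (x :: r) 0 = RtoC 0.
Proof. destruct x; reflexivity. Qed.

Lemma RtoC_INR_neq_0 m : (1 <= m)%nat -> RtoC (INR m) <> RtoC 0.
Proof.
  intros Hm E. apply (f_equal fst) in E. simpl in E. pose proof (INR_ge_1 m Hm). lra.
Qed.

Lemma Cmod_term x m : (1 <= m)%nat -> Cmod (snd x) = 1 -> Cmod (term x m) = / INR m ^ fst x.
Proof.
  intros Hm Hx. unfold term.
  rewrite Cmod_div by (apply Cpow_nz, RtoC_INR_neq_0, Hm).
  rewrite !Cmod_pow, Hx, pow1, Cmod_R, Rabs_right by (pose proof (INR_ge_1 m Hm); lra).
  unfold Rdiv. ring.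
Qed.

Lemma Cmod_term_le x m : (1 <= m)%nat -> unimodular x -> Cmod (term x m) <= / INR m.
Proof.
  intros Hm [Hs Hx]. rewrite Cmod_term by assumption. pose proof (INR_ge_1 m Hm).
  apply Rinv_le_contravar; [lra|].
  replace (INR m) with (INR m ^ 1) at 1 by ring. apply Rle_pow; assumption.
Qed.

Lemma Cmod_nsum_le w M : List.Forall unimodular w -> Cmod (nsum w M) <= harm M ^ length w.
Proof.
  revert M. induction w as [|x r IH]; intros M Hw.
  { simpl. rewrite Cmod_1. lra. }
  inversion Hw as [|? ? Hx Hr]; subst. simpl length.
  induction M as [|M IHM].
  { rewrite nsum_cons_0, Cmod_0. simpl. lra. }
  rewrite nsum_cons_S, harm_S. eapply Rle_trans; [apply Cmod_triangle|].
  rewrite Cmod_mult.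
  pose proof (Cmod_term_le x (S M) ltac:(lia) Hx). pose proof (IH M Hr).
  pose proof (Cmod_ge_0 (term x (S M))). pose proof (Rinv_INR_pos (S M) ltac:(lia)).
  pose proof (harm_nonneg M) as Hharm.
  assert (harm M ^ length r <= (harm M + / INR (S M)) ^ length r) by (apply pow_incr; lra).
  pose proof (pow_le (harm M) (length r) Hharm).
  rewrite <- !tech_pow_Rmult in *. nra.
Qed.

Lemma Cmod_nsum_sub_pred_le w m : List.Forall unimodular w -> (1 <= m)%nat ->
  Cmod (nsum w m - nsum w (m - 1))%C <= harm m ^ length w / INR m.
Proof.
  intros Hw Hm. pose proof (Rinv_INR_pos m Hm).
  destruct w as [|x r].
  { simpl. replace (RtoC 1 - RtoC 1)%C with (RtoC 0) by ring. rewrite Cmod_0. lra. }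
  inversion Hw as [|? ? Hx Hr]; subst. destruct m as [|m]; [lia|].
  rewrite nsum_cons_S. replace (S m - 1)%nat with m by lia.
  replace (nsum (x :: r) m + term x (S m) * nsum r m - nsum (x :: r) m)%C
    with (term x (S m) * nsum r m)%C by ring.
  rewrite Cmod_mult.
  pose proof (Cmod_term_le x (S m) Hm Hx). pose proof (Cmod_nsum_le r m Hr).
  pose proof (harm_ge_1 (S m) Hm). pose proof (harm_le_harm m (S m) ltac:(lia)).
  assert (harm m ^ length r <= harm (S m) ^ length (x :: r)).
  { change (length (x :: r)) with (S (length r)). rewrite <- tech_pow_Rmult.
    apply Rle_trans with (harm (S m) ^ length r).
    { apply pow_incr. split; [apply harm_nonneg | lra]. }
    pose proof (pow_le (harm (S m)) (length r) ltac:(lra)). nra. }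
  pose proof (Cmod_ge_0 (term x (S m))). pose proof (Cmod_ge_0 (nsum r m)).
  unfold Rdiv. rewrite Rmult_comm. apply Rmult_le_compat; lra.
Qed.

(** * Convergence of admissible nested sums *)

Lemma Cmod_csum_sub_le (f : nat -> C) (e : nat -> R) M N : (M <= N)%nat ->
  (forall n, (M <= n < N)%nat -> Cmod (f (S n)) <= e n - e (S n)) ->
  Cmod (csum f N - csum f M)%C <= e M - e N.
Proof.
  induction 1 as [|N HMN IH]; intros Hf.
  { replace (csum f M - csum f M)%C with (RtoC 0) by ring. rewrite Cmod_0. lra. }
  rewrite csum_S.
  replace (csum f N + f (S N) - csum f M)%C with ((csum f N - csum f M) + f (S N))%C by ring.
  eapply Rle_trans; [apply Cmod_triangle|].
  pose proof (IH ltac:(intros; apply Hf; lia)). pose proof (Hf N ltac:(lia)). lra.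
Qed.

Lemma abel_summation (a : C) (g : nat -> C) M k :
  let f m := (a ^ m * g m)%C in
  let h m := (a ^ m * (g m - g (m - 1)%nat))%C in
  ((1 - a) * (csum f (S M + k) - csum f M))%C =
  (a ^ S M * g (S M) - a ^ S (S M + k) * g (S M + k)%nat + (csum h (S M + k) - csum h (S M)))%C.
Proof.
  intros f h. induction k as [|k IH].
  { rewrite Nat.add_0_r, csum_S. unfold f. rewrite (Cpow_S a (S M)). ring. }
  replace (S M + S k)%nat with (S (S M + k)) by lia.
  set (n := (S M + k)%nat) in *.
  assert (Eh : h (S n) = (a ^ S n * (g (S n) - g n))%C).
  { unfold h. replace (S n - 1)%nat with n by lia. reflexivity. }
  rewrite (csum_S f n), (csum_S h n), Eh.
  replace ((1 - a) * (csum f n + f (S n) - csum f M))%C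
    with ((1 - a) * (csum f n - csum f M) + (1 - a) * f (S n))%C by ring.
  rewrite IH. unfold f. rewrite (Cpow_S a (S n)). ring.
Qed.

Lemma Cmod_abel_le (a : C) (g : nat -> C) (e : nat -> R) M N :
  Cmod a = 1 -> (M <= N)%nat ->
  (forall m, (M <= m)%nat -> Cmod (g m) <= e m) ->
  (forall n, (M <= n)%nat -> Cmod (g (S n) - g n)%C <= e n - e (S n)) ->
  Cmod ((1 - a) * (csum (fun m => a ^ m * g m) N - csum (fun m => a ^ m * g m) M))%C <= 2 * e M.
Proof.
  intros Ha HMN Hg Hdg.
  assert (Hpow : forall j, Cmod (a ^ j) = 1) by (intros j; rewrite Cmod_pow, Ha; apply pow1).
  pose proof (Cmod_ge_0 (g M)). pose proof (Hg M (le_n M)).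
  destruct (Nat.eq_dec M N) as [<-|HMN'].
  { replace (csum (fun m => a ^ m * g m) M - csum (fun m => a ^ m * g m) M)%C with (RtoC 0) by ring.
    rewrite Cmult_0_r, Cmod_0. lra. }
  replace N with (S M + (N - S M))%nat by lia.
  rewrite abel_summation.
  set (k := (N - S M)%nat).
  set (h := fun m => (a ^ m * (g m - g (m - 1)%nat))%C).
  assert (Hh : Cmod (csum h (S M + k) - csum h (S M))%C <= e (S M) - e (S M + k)%nat).
  { apply Cmod_csum_sub_le; [lia|]. intros n Hn. unfold h.
    replace (S n - 1)%nat with n by lia. rewrite Cmod_mult, Hpow, Rmult_1_l. apply Hdg. lia. }
  pose proof (Hg (S M) ltac:(lia)). pose proof (Hg (S M + k)%nat ltac:(lia)).
  pose proof (Hdg M (le_n M)). pose proof (Cmod_ge_0 (g (S M) - g M)%C).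
  eapply Rle_trans; [apply Cmod_triangle|].
  eapply Rle_trans; [apply Rplus_le_compat_r, Cmod_triangle|].
  rewrite Cmod_opp, !Cmod_mult, !Hpow, !Rmult_1_l. lra.
Qed.

Lemma Clim_of_rate (u : nat -> C) (e : nat -> R) : is_lim_seq e 0 ->
  (forall M N, (1 <= M)%nat -> (M <= N)%nat -> Cmod (u N - u M)%C <= e M) ->
  exists L, forall M, (1 <= M)%nat -> Cmod (u M - L)%C <= 2 * e M.
Proof.
  intros He Hu.
  destruct (is_lim_seq_of_rate (fun n => fst (u n)) e He) as [lr [_ Hr]].
  { intros M N HM HMN. eapply Rle_trans; [|apply (Hu M N HM HMN)].
    eapply Rle_trans; [|apply Rmax_Cmod]. apply Rmax_l. }
  destruct (is_lim_seq_of_rate (fun n => snd (u n)) e He) as [li [_ Hi]].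
  { intros M N HM HMN. eapply Rle_trans; [|apply (Hu M N HM HMN)].
    eapply Rle_trans; [|apply Rmax_Cmod]. apply Rmax_r. }
  exists (lr, li). intros M HM.
  assert (Hmax : Rmax (Rabs (fst (u M - (lr, li))%C)) (Rabs (snd (u M - (lr, li))%C)) <= e M).
  { apply Rmax_lub; [apply Hr | apply Hi]; exact HM. }
  assert (Hsqrt2 : sqrt 2 <= 2).
  { rewrite <- (sqrt_square 2) at 2 by lra. apply sqrt_le_1_alt. lra. }
  pose proof (sqrt_pos 2). pose proof (Rle_trans _ _ _ (Rmax_l _ _) Hmax).
  pose proof (Rabs_pos (fst (u M - (lr, li))%C)).
  eapply Rle_trans; [apply Cmod_2Rmax|]. nra.
Qed.

Lemma Cmod_div_S_sub_div_le (u v : C) (D : R) n : (1 <= n)%nat ->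
  Cmod (u - v)%C <= D / INR n -> Cmod v <= D ->
  Cmod (u / INR (S n) - v / INR n)%C <= 4 * D / INR (S n) ^ 2.
Proof.
  intros Hn Huv Hv. pose proof (INR_ge_1 n Hn) as Hx. pose proof (S_INR n) as ES.
  replace (u / INR (S n) - v / INR n)%C
    with ((u - v) * RtoC (/ INR (S n)) + v * RtoC (/ INR (S n) - / INR n))%C
    by (rewrite RtoC_minus, !RtoC_inv by lra; unfold Cdiv; ring).
  eapply Rle_trans; [apply Cmod_triangle|]. rewrite !Cmod_mult, !Cmod_R.
  assert (E1 : Rabs (/ INR (S n)) = / INR (S n)) by (apply Rabs_right; left; apply Rinv_0_lt_compat; lra).
  assert (E2 : Rabs (/ INR (S n) - / INR n) = / (INR n * INR (S n))).
  { rewrite Rabs_left1, ES; [field; lra|]. apply Rle_minus, Rinv_le_contravar; lra. }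
  rewrite E1, E2. pose proof (Cmod_ge_0 v) as Hv0.
  apply Rle_trans with (2 * D / (INR n * INR (S n))).
  { apply Rle_trans with (D / INR n * / INR (S n) + D * / (INR n * INR (S n))).
    - apply Rplus_le_compat; apply Rmult_le_compat_r; try assumption;
        left; apply Rinv_0_lt_compat; nra.
    - right. field. lra. }
  assert (Hinv : / (INR n * INR (S n)) <= 2 * / INR (S n) ^ 2).
  { replace (2 * / INR (S n) ^ 2) with (/ (INR (S n) ^ 2 / 2)) by (field; lra).
    apply Rinv_le_contravar; rewrite ES; nra. }
  unfold Rdiv. pose proof (Rmult_le_compat_l D _ _ (Rle_trans _ _ _ Hv0 Hv) Hinv). lra.
Qed.

Definition cauchy_inv_sqrt (u : nat -> C) : Prop :=
  exists K, forall M N, (1 <= M)%nat -> (M <= N)%nat -> Cmod (u N - u M)%C <= K * inv_sqrt M.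

Definition admissible_head (w : list (nat * C)) : Prop :=
  match w with nil => True | (s, a) :: _ => ~ (s = 1%nat /\ a = RtoC 1) end.

Lemma nsum_cauchy_head_ge_2 s a r : (2 <= s)%nat -> Cmod a = 1 -> List.Forall unimodular r ->
  cauchy_inv_sqrt (nsum ((s, a) :: r)).
Proof.
  intros Hs Ha Hr. destruct (harm_pow_le_sqrt (length r)) as [K [HK Hb]].
  exists (2 * K). intros M N HM HMN. rewrite !nsum_cons.
  eapply Rle_trans.
  { apply (Cmod_csum_sub_le _ (fun n => 2 * K * inv_sqrt n)); [exact HMN|].
    intros n Hn. replace (S n - 1)%nat with n by lia.
    rewrite Cmod_mult, Cmod_term by (lia || exact Ha). simpl fst.
    pose proof (INR_ge_1 (S n) ltac:(lia)).
    assert (Hterm : / INR (S n) ^ s <= / INR (S n) ^ 2).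
    { apply Rinv_le_contravar; [apply pow_lt; lra | apply Rle_pow; lia || lra]. }
    assert (Hnsum : Cmod (nsum r n) <= K * sqrt (INR (S n))).
    { eapply Rle_trans; [apply Cmod_nsum_le, Hr | apply Hb; lia]. }
    pose proof (sqrt_div_sqr_le n ltac:(lia)).
    apply Rle_trans with (/ INR (S n) ^ 2 * (K * sqrt (INR (S n)))).
    - apply Rmult_le_compat; try apply Cmod_ge_0; try assumption.
      left. apply Rinv_0_lt_compat, pow_lt. lra.
    - replace (/ INR (S n) ^ 2 * (K * sqrt (INR (S n)))) with (K * (sqrt (INR (S n)) / INR (S n) ^ 2))
        by (unfold Rdiv; ring).
      apply Rle_trans with (K * (2 * (inv_sqrt n - inv_sqrt (S n)))); [apply Rmult_le_compat_l; lra|].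
      right. ring. }
  pose proof (inv_sqrt_nonneg N). nra.
Qed.

(* Abel summation against the bounded partial sums of [a ^ m], [a <> 1]. *)
Lemma nsum_cauchy_head_1 a r : Cmod a = 1 -> a <> RtoC 1 -> List.Forall unimodular r ->
  cauchy_inv_sqrt (nsum ((1%nat, a) :: r)).
Proof.
  intros Ha Ha1 Hr. destruct (harm_pow_le_sqrt (length r)) as [K [HK Hb]].
  assert (Hnsum : forall n m, (n <= m)%nat -> (1 <= m)%nat -> Cmod (nsum r n) <= K * sqrt (INR m)).
  { intros n m Hnm Hm. eapply Rle_trans; [apply Cmod_nsum_le, Hr | apply Hb; assumption]. }
  set (g := fun m => (nsum r (m - 1) / INR m)%C).
  assert (Ef : forall m, (1 <= m)%nat -> (term (1%nat, a) m * nsum r (m - 1))%C = (a ^ m * g m)%C).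
  { intros m Hm. unfold term, g. simpl fst. simpl snd. rewrite Cpow_1_r. unfold Cdiv. ring. }
  assert (Hg : forall m, (1 <= m)%nat -> Cmod (g m) <= 8 * K * inv_sqrt m).
  { intros m Hm. pose proof (INR_ge_1 m Hm). unfold g.
    rewrite Cmod_div by (apply RtoC_INR_neq_0, Hm). rewrite Cmod_R, Rabs_right by lra.
    rewrite <- sqrt_div_INR by exact Hm. pose proof (sqrt_pos (INR m)).
    apply Rle_trans with (K * sqrt (INR m) / INR m).
    - apply Rmult_le_compat_r; [left; apply Rinv_0_lt_compat; lra | apply Hnsum; lia].
    - unfold Rdiv. assert (0 <= sqrt (INR m) * / INR m) by (apply Rmult_le_pos; [lra | left; apply Rinv_0_lt_compat; lra]).
      nra. }
  assert (Hdg : forall n, (1 <= n)%nat ->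
    Cmod (g (S n) - g n)%C <= 8 * K * inv_sqrt n - 8 * K * inv_sqrt (S n)).
  { intros n Hn. unfold g. replace (S n - 1)%nat with n by lia.
    eapply Rle_trans.
    { apply (Cmod_div_S_sub_div_le _ _ (K * sqrt (INR (S n))) n Hn).
      - eapply Rle_trans; [apply Cmod_nsum_sub_pred_le; assumption|].
        apply Rmult_le_compat_r; [left; apply Rinv_INR_pos, Hn | apply Hb; lia].
      - apply Hnsum; lia. }
    pose proof (sqrt_div_sqr_le n Hn).
    replace (4 * (K * sqrt (INR (S n))) / INR (S n) ^ 2) with (4 * K * (sqrt (INR (S n)) / INR (S n) ^ 2))
      by (unfold Rdiv; ring).
    nra. }
  assert (Hd : 0 < Cmod (1 - a)%C).
  { apply Cmod_gt_0. intros E. apply Ha1.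
    replace a with (1 - (1 - a))%C by ring. rewrite E. ring. }
  exists (16 * K / Cmod (1 - a)%C). intros M N HM HMN.
  rewrite !nsum_cons, (csum_ext _ _ N Ef), (csum_ext _ _ M Ef).
  apply (Rmult_le_reg_l (Cmod (1 - a)%C) _ _ Hd). rewrite <- Cmod_mult.
  eapply Rle_trans.
  { apply (Cmod_abel_le a g (fun m => 8 * K * inv_sqrt m) M N Ha HMN).
    - intros m Hm. apply Hg. lia.
    - intros n Hn. apply Hdg. lia. }
  right. field. lra.
Qed.

Lemma nsum_converges w : List.Forall unimodular w -> admissible_head w ->
  exists L K, forall M, (1 <= M)%nat -> Cmod (nsum w M - L)%C <= K * inv_sqrt M.
Proof.
  intros Hw Hhead. destruct w as [|[s a] r].
  { exists (RtoC 1), 0. intros M _. simpl.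
    replace (RtoC 1 - RtoC 1)%C with (RtoC 0) by ring. rewrite Cmod_0. lra. }
  inversion Hw as [|? ? [Hs Ha] Hr]; subst. simpl in Hs, Ha, Hhead.
  assert (Hcauchy : cauchy_inv_sqrt (nsum ((s, a) :: r))).
  { destruct (Nat.eq_dec s 1) as [->|Hs1].
    - apply nsum_cauchy_head_1; [exact Ha | intros E; apply Hhead; auto | exact Hr].
    - apply nsum_cauchy_head_ge_2; [lia | exact Ha | exact Hr]. }
  destruct Hcauchy as [K HK].
  destruct (Clim_of_rate _ _ (is_lim_seq_scal_0 K _ is_lim_seq_inv_sqrt) HK) as [L HL].
  exists L, (2 * K). intros M HM. rewrite Rmult_assoc. apply HL, HM.
Qed.

(** * Stuffle regularization *)

Definition merge (x y : nat * C) : nat * C := ((fst x + fst y)%nat, (snd x * snd y)%C).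

Lemma term_merge x y m : (1 <= m)%nat -> term (merge x y) m = (term x m * term y m)%C.
Proof.
  intros Hm. unfold term, merge. simpl. rewrite Cpow_mult_l, Cpow_add_r.
  pose proof (Cpow_nz _ (fst x) (RtoC_INR_neq_0 m Hm)). pose proof (Cpow_nz _ (fst y) (RtoC_INR_neq_0 m Hm)).
  field. split; assumption.
Qed.

Fixpoint stuffle1 (x : nat * C) (w : list (nat * C)) : list (list (nat * C)) :=
  match w with
  | nil => (x :: nil) :: nil
  | y :: ys => (x :: y :: ys) :: (merge x y :: ys) :: map (cons y) (stuffle1 x ys)
  end.

Definition nsum_list (L : list (list (nat * C))) (M : nat) : C :=
  fold_right (fun w acc => (nsum w M + acc)%C) (RtoC 0) L.

Lemma nsum_list_cons w L M : nsum_list (w :: L) M = (nsum w M + nsum_list L M)%C.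
Proof. reflexivity. Qed.

Lemma nsum_list_map_cons_0 y L : nsum_list (map (cons y) L) 0 = RtoC 0.
Proof.
  induction L as [|w L IH]; [reflexivity|].
  cbn [map]. rewrite nsum_list_cons, IH, nsum_cons_0. ring.
Qed.

Lemma nsum_list_map_cons_S y L M : nsum_list (map (cons y) L) (S M) =
  (nsum_list (map (cons y) L) M + term y (S M) * nsum_list L M)%C.
Proof.
  induction L as [|w L IH]; [simpl; ring|].
  cbn [map]. rewrite !nsum_list_cons, IH, nsum_cons_S. ring.
Qed.

(* Both sides vanish at [M = 0] and have the same increments. *)
Lemma nsum_mul_stuffle1 x w M : (nsum (x :: nil) M * nsum w M)%C = nsum_list (stuffle1 x w) M.
Proof.
  revert M. induction w as [|y ys IH]; intros M.
  { unfold nsum_list. simpl. ring. }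
  cbn [stuffle1]. rewrite !nsum_list_cons.
  induction M as [|M IHM].
  { rewrite !nsum_cons_0, nsum_list_map_cons_0. ring. }
  rewrite !nsum_cons_S, nsum_list_map_cons_S, <- IH, term_merge by lia.
  replace (nsum nil M) with (RtoC 1) by reflexivity.
  replace (nsum (x :: y :: ys) M) with
    (nsum (x :: nil) M * nsum (y :: ys) M - nsum (merge x y :: ys) M
     - nsum_list (map (cons y) (stuffle1 x ys)) M)%C by (rewrite IHM; ring).
  ring.
Qed.

Definition root_letter (N : nat) (x : nat * C) : Prop := (1 <= fst x)%nat /\ (snd x ^ N)%C = RtoC 1.

Definition admissible (N : nat) (u : list (nat * C)) : Prop :=
  List.Forall (root_letter N) u /\ admissible_head u.

Definition word_weight (w : list (nat * C)) : nat := fold_right (fun p acc => (fst p + acc)%nat) O w.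

Definition one_letter : nat * C := (1%nat, RtoC 1).

Definition ones (k : nat) : list (nat * C) := repeat one_letter k.

Lemma word_weight_cons x w : word_weight (x :: w) = (fst x + word_weight w)%nat.
Proof. reflexivity. Qed.

Lemma word_weight_app w1 w2 : word_weight (w1 ++ w2) = (word_weight w1 + word_weight w2)%nat.
Proof. induction w1 as [|x w1 IH]; [reflexivity|]. rewrite <- app_comm_cons, !word_weight_cons. lia. Qed.

Lemma word_weight_ones k : word_weight (ones k) = k.
Proof. induction k as [|k IH]; [reflexivity|]. change (ones (S k)) with (one_letter :: ones k). rewrite word_weight_cons, IH. reflexivity. Qed.

Lemma root_letter_one N : root_letter N one_letter.
Proof. split; [simpl; lia | apply Cpow_1_l]. Qed.

Lemma root_letters_ones N k : List.Forall (root_letter N) (ones k).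
Proof. induction k; constructor; [apply root_letter_one | assumption]. Qed.

Lemma root_letter_merge N x y : root_letter N x -> root_letter N y -> root_letter N (merge x y).
Proof.
  intros [Hx Ex] [Hy Ey]. split; simpl; [lia|]. rewrite Cpow_mult_l, Ex, Ey. ring.
Qed.

Lemma admissible_merge_one N y ys : root_letter N y -> List.Forall (root_letter N) ys ->
  admissible N (merge one_letter y :: ys).
Proof.
  intros Hy Hys. split.
  - constructor; [apply root_letter_merge; [apply root_letter_one | exact Hy] | exact Hys].
  - destruct Hy as [Hs _]. destruct y as [s b]. simpl in *. intros [E _]. lia.
Qed.

Lemma stuffle1_root_letters N x w : root_letter N x -> List.Forall (root_letter N) w ->
  List.Forall (List.Forall (root_letter N)) (stuffle1 x w).
Proof.
  intros Hx Hw. induction Hw as [|y ys Hy Hys IH]; simpl.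
  - constructor; [constructor; [exact Hx | constructor] | constructor].
  - constructor; [constructor; [exact Hx | constructor; assumption]|].
    constructor; [constructor; [apply root_letter_merge|]; assumption|].
    apply Forall_map. eapply Forall_impl; [|exact IH]. intros v Hv. constructor; assumption.
Qed.

Lemma stuffle1_weight x w :
  List.Forall (fun v => word_weight v = (fst x + word_weight w)%nat) (stuffle1 x w).
Proof.
  induction w as [|y ys IH]; simpl stuffle1.
  - repeat constructor.
  - constructor; [reflexivity|]. constructor; [simpl; lia|].
    apply Forall_map. eapply Forall_impl; [|exact IH]. intros v Hv. simpl. rewrite Hv. lia.
Qed.

Definition ones_then_admissible (N k W : nat) (w : list (nat * C)) : Prop :=
  exists j u, w = ones j ++ u /\ (j <= k)%nat /\ admissible N u /\ word_weight w = W.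

Lemma ones_then_admissible_cons_one N k W w : ones_then_admissible N k W w ->
  ones_then_admissible N (S k) (S W) (one_letter :: w).
Proof.
  intros [j [u [-> [Hj [Hu Hw]]]]]. exists (S j), u.
  split; [reflexivity|]. split; [lia|]. split; [exact Hu|].
  rewrite word_weight_cons, Hw. reflexivity.
Qed.

Lemma nsum_list_stuffle1_admissible N u : admissible N u -> exists rest,
  (forall M, nsum_list (stuffle1 one_letter u) M = (nsum (one_letter :: u) M + nsum_list rest M)%C) /\
  List.Forall (ones_then_admissible N 0 (S (word_weight u))) rest.
Proof.
  intros [Hu Hhead]. destruct u as [|y ys].
  { exists nil. split; [|constructor]. intros M. simpl. ring. }
  inversion Hu as [|? ? Hy Hys]; subst.
  exists ((merge one_letter y :: ys) :: map (cons y) (stuffle1 one_letter ys)). split.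
  { intros M. cbn [stuffle1]. rewrite !nsum_list_cons. ring. }
  constructor.
  - exists O, (merge one_letter y :: ys).
    split; [reflexivity|]. split; [lia|]. split; [apply admissible_merge_one; assumption|].
    simpl. lia.
  - pose proof (stuffle1_root_letters N one_letter ys (root_letter_one N) Hys) as Hroot.
    pose proof (stuffle1_weight one_letter ys) as Hweight.
    apply Forall_map. rewrite Forall_forall in Hroot, Hweight |- *. intros v Hv.
    exists O, (y :: v). split; [reflexivity|]. split; [lia|].
    split; [split; [constructor; [exact Hy | apply Hroot, Hv] | exact Hhead]|].
    specialize (Hweight v Hv). rewrite !word_weight_cons, Hweight. simpl. lia.
Qed.

(* Among the words of the stuffle of [1] with [1^k u], exactly [k + 1] equal [1^(k+1) u]. *)
Lemma nsum_list_stuffle1_ones N k u : admissible N u -> exists rest,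
  (forall M, nsum_list (stuffle1 one_letter (ones k ++ u)) M =
     (INR (S k) * nsum (ones (S k) ++ u) M + nsum_list rest M)%C) /\
  List.Forall (ones_then_admissible N k (S (k + word_weight u))) rest.
Proof.
  intros Hu. induction k as [|k IH].
  - destruct (nsum_list_stuffle1_admissible N u Hu) as [rest [Hrest Hok]].
    exists rest. split; [|exact Hok]. intros M.
    change (ones 0 ++ u) with u. change (ones 1 ++ u) with (one_letter :: u).
    rewrite Hrest. simpl INR. ring.
  - destruct IH as [rest [Hrest Hok]].
    exists ((merge one_letter one_letter :: ones k ++ u) :: map (cons one_letter) rest). split.
    + assert (Hmap : forall M,
        nsum_list (map (cons one_letter) (stuffle1 one_letter (ones k ++ u))) M =
        (INR (S k) * nsum (one_letter :: ones (S k) ++ u) M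
         + nsum_list (map (cons one_letter) rest) M)%C).
      { induction M as [|M IHM].
        - rewrite !nsum_list_map_cons_0, nsum_cons_0. ring.
        - rewrite !nsum_list_map_cons_S, nsum_cons_S, IHM, Hrest. ring. }
      intros M. change (ones (S k) ++ u) with (one_letter :: (ones k ++ u)) at 1.
      cbn [stuffle1]. rewrite !nsum_list_cons, Hmap.
      change (one_letter :: one_letter :: ones k ++ u) with (one_letter :: ones (S k) ++ u).
      change (ones (S (S k)) ++ u) with (one_letter :: ones (S k) ++ u).
      rewrite (S_INR (S k)), RtoC_plus. ring.
    + constructor.
      * exists O, (merge one_letter one_letter :: ones k ++ u).
        split; [reflexivity|]. split; [lia|]. split.
        -- apply admissible_merge_one; [apply root_letter_one|].
           apply Forall_app. split; [apply root_letters_ones | exact (proj1 Hu)].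
        -- rewrite word_weight_cons, word_weight_app, word_weight_ones. simpl. lia.
      * apply Forall_map. eapply Forall_impl; [|exact Hok]. intros w Hw.
        apply ones_then_admissible_cons_one, Hw.
Qed.

(* An entry [(j, q, v)] stands for [q * harm M ^ j * nsum v M]. *)
Definition expansion : Type := list (nat * Q * list (nat * C)).

Definition eval_expansion (E : expansion) (M : nat) : C :=
  fold_right (fun '(j, q, v) acc => (RtoC (Q2R q) * RtoC (harm M) ^ j * nsum v M + acc)%C)
    (RtoC 0) E.

Lemma eval_expansion_cons j q v E M : eval_expansion ((j, q, v) :: E) M =
  (RtoC (Q2R q) * RtoC (harm M) ^ j * nsum v M + eval_expansion E M)%C.
Proof. reflexivity. Qed.

Lemma eval_expansion_app E1 E2 M :
  eval_expansion (E1 ++ E2) M = (eval_expansion E1 M + eval_expansion E2 M)%C.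
Proof.
  induction E1 as [|[[j q] v] E1 IH]; [simpl; ring|].
  rewrite <- app_comm_cons, !eval_expansion_cons, IH. ring.
Qed.

Definition expansion_ok (N W : nat) (E : expansion) : Prop :=
  List.Forall (fun '(j, q, v) => admissible N v /\ (j + word_weight v)%nat = W) E.

Definition has_expansion (N W : nat) (f : nat -> C) : Prop :=
  exists E, (forall M, f M = eval_expansion E M) /\ expansion_ok N W E.

Lemma has_expansion_nil N W : has_expansion N W (fun _ => RtoC 0).
Proof. exists nil. split; [reflexivity | constructor]. Qed.

Lemma has_expansion_admissible N v : admissible N v -> has_expansion N (word_weight v) (nsum v).
Proof.
  intros Hv. exists ((O, 1%Q, v) :: nil). split.
  - intros M. simpl. replace (Q2R 1) with 1 by (unfold Q2R; simpl; field). ring.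
  - constructor; [split; [exact Hv | reflexivity] | constructor].
Qed.

Lemma has_expansion_add N W f g : has_expansion N W f -> has_expansion N W g ->
  has_expansion N W (fun M => (f M + g M)%C).
Proof.
  intros [E1 [H1 OK1]] [E2 [H2 OK2]]. exists (E1 ++ E2). split.
  - intros M. rewrite H1, H2, eval_expansion_app. reflexivity.
  - apply Forall_app. split; assumption.
Qed.

Lemma has_expansion_scale N W q f : has_expansion N W f ->
  has_expansion N W (fun M => (RtoC (Q2R q) * f M)%C).
Proof.
  intros [E [HE OK]]. exists (map (fun '(j, q', v) => (j, (q * q')%Q, v)) E). split.
  - intros M. rewrite HE. clear HE OK. induction E as [|[[j q'] v] E IH]; [simpl; ring|].
    cbn [map]. rewrite !eval_expansion_cons, <- IH, Q2R_mult, RtoC_mult. ring.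
  - apply Forall_map. eapply Forall_impl; [|exact OK]. intros [[j q'] v] Hok. exact Hok.
Qed.

Lemma has_expansion_mul_harm N W f : has_expansion N W f ->
  has_expansion N (S W) (fun M => (RtoC (harm M) * f M)%C).
Proof.
  intros [E [HE OK]]. exists (map (fun '(j, q, v) => (S j, q, v)) E). split.
  - intros M. rewrite HE. clear HE OK. induction E as [|[[j q] v] E IH]; [simpl; ring|].
    cbn [map]. rewrite !eval_expansion_cons, <- IH. simpl Cpow. ring.
  - apply Forall_map. eapply Forall_impl; [|exact OK]. intros [[j q] v] [Hv Hw]. split; [exact Hv | lia].
Qed.

Lemma has_expansion_nsum_list N W L :
  List.Forall (fun w => has_expansion N W (nsum w)) L -> has_expansion N W (nsum_list L).
Proof.
  induction 1 as [|w L Hw HL IH].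
  - apply has_expansion_nil.
  - apply (has_expansion_add N W _ _ Hw IH).
Qed.

Lemma has_expansion_ext N W f g : (forall M, f M = g M) -> has_expansion N W f -> has_expansion N W g.
Proof. intros Hfg [E [HE OK]]. exists E. split; [intros M; rewrite <- Hfg; apply HE | exact OK]. Qed.

Lemma nsum_one_letter M : nsum (one_letter :: nil) M = RtoC (harm M).
Proof.
  induction M as [|M IH]; [reflexivity|].
  rewrite nsum_cons_S, IH, harm_S, RtoC_plus. unfold term, one_letter. simpl fst; simpl snd.
  rewrite Cpow_1_l, Cpow_1_r, RtoC_inv by (pose proof (INR_ge_1 (S M) ltac:(lia)); lra).
  simpl nsum. unfold Cdiv. ring.
Qed.

Lemma Q2R_inv_succ k : Q2R (1 # Pos.of_succ_nat k) = / INR (S k).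
Proof.
  unfold Q2R. simpl Qnum. simpl Qden.
  rewrite Zpos_P_of_succ_nat, <- Nat2Z.inj_succ, <- INR_IZR_INZ. field.
  pose proof (INR_ge_1 (S k) ltac:(lia)). lra.
Qed.

Lemma regularize N k u : admissible N u -> has_expansion N (k + word_weight u) (nsum (ones k ++ u)).
Proof.
  revert u. induction k as [k IH] using (well_founded_induction lt_wf). intros u Hu.
  destruct k as [|k].
  { apply has_expansion_admissible, Hu. }
  destruct (nsum_list_stuffle1_ones N k u Hu) as [rest [Hrest Hok]].
  assert (Hexp_rest : has_expansion N (S (k + word_weight u)) (nsum_list rest)).
  { apply has_expansion_nsum_list. eapply Forall_impl; [|exact Hok].
    intros w [j [u' [-> [Hj [Hu' Hw]]]]]. rewrite <- Hw, word_weight_app, word_weight_ones.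
    apply IH; [lia | exact Hu']. }
  pose proof (has_expansion_mul_harm N _ _ (IH k (Nat.lt_succ_diag_r k) u Hu)) as Hexp_harm.
  pose proof (has_expansion_add N _ _ _ Hexp_harm
    (has_expansion_scale N _ (-1)%Q _ Hexp_rest)) as Hexp.
  apply (has_expansion_scale N _ (1 # Pos.of_succ_nat k)) in Hexp.
  simpl plus. eapply has_expansion_ext; [|exact Hexp]. intros M. cbv beta.
  rewrite <- nsum_one_letter, nsum_mul_stuffle1, Hrest, Q2R_inv_succ, RtoC_inv
    by (pose proof (INR_ge_1 (S k) ltac:(lia)); lra).
  replace (Q2R (-1)) with (-1) by (unfold Q2R; simpl; field).
  field. apply RtoC_INR_neq_0. lia.
Qed.

(** * Asymptotic expansion *)

Definition asymp_eq (u v : nat -> C) : Prop := is_lim_seq (fun M => Cmod (u M - v M)%C) 0.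

Lemma asymp_eq_ext u v u' v' : (forall M, u M = u' M) -> (forall M, v M = v' M) ->
  asymp_eq u v -> asymp_eq u' v'.
Proof.
  intros Hu Hv. apply is_lim_seq_ext. intros M. rewrite Hu, Hv. reflexivity.
Qed.

Lemma asymp_eq_add u1 v1 u2 v2 : asymp_eq u1 v1 -> asymp_eq u2 v2 ->
  asymp_eq (fun M => u1 M + u2 M)%C (fun M => v1 M + v2 M)%C.
Proof.
  intros H1 H2. apply is_lim_seq_0_le with (fun M => Cmod (u1 M - v1 M)%C + Cmod (u2 M - v2 M)%C);
    [apply is_lim_seq_add_0; assumption|].
  intros M _. rewrite Rabs_right by (apply Rle_ge, Cmod_ge_0).
  replace (u1 M + u2 M - (v1 M + v2 M))%C with ((u1 M - v1 M) + (u2 M - v2 M))%C by ring.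
  apply Cmod_triangle.
Qed.

Lemma asymp_eq_scale a u v : asymp_eq u v -> asymp_eq (fun M => a * u M)%C (fun M => a * v M)%C.
Proof.
  intros Huv. apply is_lim_seq_ext with (fun M => Cmod a * Cmod (u M - v M)%C).
  - intros M. rewrite <- Cmod_mult. f_equal. ring.
  - apply is_lim_seq_scal_0, Huv.
Qed.

Lemma asymp_eq_harm_pow_mul j (u : nat -> C) L K :
  (forall M, (1 <= M)%nat -> Cmod (u M - L)%C <= K * inv_sqrt M) ->
  asymp_eq (fun M => RtoC (harm M) ^ j * u M)%C (fun M => L * RtoC (log_gamma M) ^ j)%C.
Proof.
  intros Hu. unfold asymp_eq.
  apply is_lim_seq_0_le with
    (fun M => K * (harm M ^ j * inv_sqrt M) + Cmod L * (harm M ^ j - log_gamma M ^ j)).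
  { apply is_lim_seq_add_0; apply is_lim_seq_scal_0;
      [apply is_lim_seq_harm_pow_mul_inv_sqrt | apply is_lim_seq_harm_pow_sub]. }
  intros M HM. rewrite Rabs_right by (apply Rle_ge, Cmod_ge_0).
  destruct (log_gamma_bounds M HM) as [HT _].
  pose proof (pow_incr _ _ j HT). pose proof (pow_le _ j (proj1 HT)).
  rewrite <- !RtoC_pow.
  replace (RtoC (harm M ^ j) * u M - L * RtoC (log_gamma M ^ j))%C
    with (RtoC (harm M ^ j) * (u M - L) + L * RtoC (harm M ^ j - log_gamma M ^ j))%C
    by (rewrite RtoC_minus; ring).
  eapply Rle_trans; [apply Cmod_triangle|]. rewrite !Cmod_mult, !Cmod_R, !Rabs_right by lra.
  pose proof (Hu M HM). pose proof (Cmod_ge_0 L).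
  apply Rplus_le_compat_r.
  apply Rle_trans with (harm M ^ j * (K * inv_sqrt M)); [apply Rmult_le_compat_l; lra | right; ring].
Qed.

Lemma Cmod_eq_1_of_root N a : (1 <= N)%nat -> (a ^ N)%C = RtoC 1 -> Cmod a = 1.
Proof.
  intros HN E. apply (f_equal Cmod) in E. rewrite Cmod_pow, Cmod_1 in E.
  pose proof (Cmod_ge_0 a).
  destruct (Rtotal_order (Cmod a) 1) as [L|[L|L]]; [|exact L|].
  - assert (Cmod a ^ N < 1) by (apply pow_lt_1_compat; [lra | lia]). lra.
  - assert (1 < Cmod a ^ N) by (apply Rlt_pow_R1; [exact L | lia]). lra.
Qed.

Lemma root_letters_unimodular N w : (1 <= N)%nat ->
  List.Forall (root_letter N) w -> List.Forall unimodular w.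
Proof.
  intros HN. apply Forall_impl. intros x [Hs Hx]. split; [exact Hs | exact (Cmod_eq_1_of_root N _ HN Hx)].
Qed.

Lemma in_CMZV_0 N W : in_CMZV N W (RtoC 0).
Proof. exists nil. split; [constructor | reflexivity]. Qed.

Lemma in_CMZV_add N W c q v L : in_CMZV N W c -> cmzv_data N W v -> mzv_value v L ->
  in_CMZV N W (RtoC (Q2R q) * L + c)%C.
Proof.
  intros [l [Hl ->]] Hv HL. exists ((q, v, L) :: l). split.
  - constructor; [exact (conj Hv HL) | exact Hl].
  - reflexivity.
Qed.

Definition log_poly (ta : list (nat * C)) (M : nat) : C :=
  fold_right (fun p acc => (snd p * RtoC (log_gamma M) ^ fst p + acc)%C) (RtoC 0) ta.

Lemma expansion_asymptotics N W E : (1 <= N)%nat -> (1 <= W)%nat -> expansion_ok N W E ->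
  exists ta c, List.Forall (fun p => (1 <= fst p)%nat) ta /\ in_CMZV N W c /\
    asymp_eq (eval_expansion E) (fun M => log_poly ta M + c)%C.
Proof.
  intros HN HW. induction 1 as [|[[j q] v] E [[Hroots Hhead] Hw] _ IH].
  { exists nil, (RtoC 0). split; [constructor|]. split; [apply in_CMZV_0|].
    apply is_lim_seq_ext with (fun _ => 0); [|apply is_lim_seq_const].
    intros M. simpl. replace (RtoC 0 - (RtoC 0 + RtoC 0))%C with (RtoC 0) by ring.
    rewrite Cmod_0. reflexivity. }
  destruct IH as [ta [c [Hta [Hc Hasymp]]]].
  destruct (nsum_converges v (root_letters_unimodular N v HN Hroots) Hhead) as [L [K HL]].
  pose proof (asymp_eq_add _ _ _ _
    (asymp_eq_scale (RtoC (Q2R q)) _ _ (asymp_eq_harm_pow_mul j (nsum v) L K HL)) Hasymp) as Hsum.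
  destruct j as [|j].
  - exists ta, (RtoC (Q2R q) * L + c)%C. split; [exact Hta|]. split.
    + apply (in_CMZV_add N W c q v L); [exact Hc| |].
      * split; [exact Hroots|]. split; [exact Hw|].
        destruct v as [|x v]; [simpl in Hw; lia | destruct x; exact Hhead].
      * apply is_lim_seq_0_le with (fun M => K * inv_sqrt M);
          [apply is_lim_seq_scal_0, is_lim_seq_inv_sqrt|].
        intros M HM. rewrite Rabs_right by (apply Rle_ge, Cmod_ge_0). apply HL, HM.
    + eapply asymp_eq_ext; [| |exact Hsum]; intros M; simpl; ring.
  - exists ((S j, RtoC (Q2R q) * L) :: ta)%C, c. split; [constructor; [simpl; lia | exact Hta]|].
    split; [exact Hc|].
    eapply asymp_eq_ext; [| |exact Hsum]; intros M; simpl; ring.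
Qed.

Lemma cos_sin_pow t n : ((cos t, sin t) ^ n)%C = (cos (INR n * t), sin (INR n * t)).
Proof.
  induction n as [|n IH].
  - simpl. rewrite Rmult_0_l, cos_0, sin_0. reflexivity.
  - rewrite Cpow_S, IH, S_INR. unfold Cmult. simpl.
    replace ((INR n + 1) * t) with (t + INR n * t) by ring.
    rewrite cos_plus, sin_plus. f_equal; ring.
Qed.

Lemma cos_sin_2PI_IZR z : cos (2 * PI * IZR z) = 1 /\ sin (2 * PI * IZR z) = 0.
Proof.
  assert (Hnat : forall k, cos (2 * PI * INR k) = 1 /\ sin (2 * PI * INR k) = 0).
  { intros k. pose proof (cos_period 0 k) as Hc. pose proof (sin_period 0 k) as Hs.
    rewrite Rplus_0_l, cos_0 in Hc. rewrite Rplus_0_l, sin_0 in Hs.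
    replace (2 * PI * INR k) with (2 * INR k * PI) by ring. split; assumption. }
  destruct (Z.le_ge_cases 0 z) as [Hz|Hz].
  - rewrite <- (Z2Nat.id z Hz), <- INR_IZR_INZ. apply Hnat.
  - replace z with (- Z.of_nat (Z.to_nat (- z)))%Z by lia.
    rewrite opp_IZR, <- INR_IZR_INZ.
    replace (2 * PI * - INR (Z.to_nat (- z))) with (- (2 * PI * INR (Z.to_nat (- z)))) by ring.
    rewrite cos_neg, sin_neg. destruct (Hnat (Z.to_nat (- z))) as [-> ->]. split; ring.
Qed.

Lemma mu_pow_root N z : (1 <= N)%nat -> (mu_pow N z ^ N)%C = RtoC 1.
Proof.
  intros HN. unfold mu_pow. rewrite cos_sin_pow. pose proof (INR_ge_1 N HN).
  replace (INR N * (2 * PI * IZR z / INR N)) with (2 * PI * IZR z) by (field; lra).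
  destruct (cos_sin_2PI_IZR z) as [-> ->]. reflexivity.
Qed.

Lemma colors_root_letters N prev l : (1 <= N)%nat -> List.Forall (fun p => (1 <= fst p)%nat) l ->
  List.Forall (root_letter N) (colors N prev l).
Proof.
  intros HN Hl. revert prev. induction Hl as [|[s i] l Hs _ IH]; intros prev; constructor.
  - split; [exact Hs | apply mu_pow_root, HN].
  - apply IH.
Qed.

Lemma word_weight_colors N prev l : word_weight (colors N prev l) = weight l.
Proof.
  revert prev. induction l as [|[s i] l IH]; intros prev; [reflexivity|].
  simpl colors. rewrite word_weight_cons, IH. reflexivity.
Qed.

Lemma split_leading_ones N w : List.Forall (root_letter N) w ->
  exists k u, w = ones k ++ u /\ admissible N u.
Proof.
  induction 1 as [|x w Hx Hw IH].
  { exists O, nil. split; [reflexivity | split; [constructor | exact I]]. }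
  destruct (classic (x = one_letter)) as [->|Hne].
  - destruct IH as [k [u [-> Hu]]]. exists (S k), u. split; [reflexivity | exact Hu].
  - exists O, (x :: w). split; [reflexivity|]. split; [constructor; assumption|].
    destruct x as [s a]. intros [-> ->]. apply Hne. reflexivity.
Qed.

Theorem proposition2p3 (N : nat) (l : list (nat * Z)) :
  (1 <= N)%nat -> l <> nil -> List.Forall (fun p => (1 <= fst p)%nat) l ->
  exists (ta : list (nat * C)) (c : C),
    List.Forall (fun p => (1 <= fst p)%nat) ta /\
    in_CMZV N (weight l) c /\
    is_lim_seq
      (fun M : nat =>
         Cmod (Cminus (H N l M)
           (Cplus (fold_right (fun p acc =>
                      Cplus (Cmult (snd p) (Cpow (RtoC (ln (INR M) + EulerGamma)) (fst p))) acc)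
                    (RtoC 0) ta)
                  c)))
      0.
Proof.
  intros HN Hnil Hl.
  destruct (split_leading_ones N _ (colors_root_letters N 0 l HN Hl)) as [k [u [Ew Hu]]].
  destruct (regularize N k u Hu) as [E [HE HEok]].
  assert (HW : (k + word_weight u)%nat = weight l).
  { rewrite <- (word_weight_colors N 0 l), Ew, word_weight_app, word_weight_ones. reflexivity. }
  assert (HW1 : (1 <= weight l)%nat).
  { destruct l as [|[s i] l']; [congruence|]. inversion Hl; subst. simpl in *. lia. }
  rewrite HW in HEok.
  destruct (expansion_asymptotics N (weight l) E HN HW1 HEok) as [ta [c [Hta [Hc Hasymp]]]].
  exists ta, c. split; [exact Hta|]. split; [exact Hc|].
  eapply is_lim_seq_ext; [|exact Hasymp]. intros M. unfold H. rewrite Ew, HE. reflexivity.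
Qed.
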